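(* Let $G$ be a finite Frobenius group with Frobenius kernel $N$ and Frobenius complement $H$. Then $$(1-t)B_G(t)=1+\frac{1}{|H|}\Big((1-t)B_N(t)-1\Big)+\Big((1-t)B_H(t)-1\Big).$$
   Context: A finite group $G$ is a Frobenius group if it has a proper non-trivial subgroup $H$ (a Frobenius complement) such that $H\cap gHg^{-1}=\{1\}$ for all $g\in G\setminus H$; the Frobenius kernel is $N=\left(G\setminus\bigcup_{g\in G}gHg^{-1}\right)\cup\{1\}$, a normal subgroup with $G=N\rtimes H$. For a finite group $G$ and $n\ge0$, let $G^{(n)}\subseteq G^n$ be the set of $n$-tuples of pairwise commuting elements, on which $G$ acts by simultaneous conjugation; let $\beta_{G,n}$ be the number of orbits and $B_G(t)=\sum_{n\ge0}\beta_{G,n}t^n$. *)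

From mathcomp Require Import all_boot all_algebra all_fingroup all_solvable frobenius.
Set Implicit Arguments. Unset Strict Implicit. Unset Printing Implicit Defensive.
Import GRing.Theory.

Section CommTuples.
Variable gT : finGroupType.
Local Open Scope group_scope.

Definition conj_tuple n (t : n.-tuple gT) (g : gT) : n.-tuple gT :=
  [tuple of map (fun x => x ^ g) t].

Definition comm_tuples (G : {set gT}) n : {set n.-tuple gT} :=
  [set t : n.-tuple gT | [forall i, tnth t i \in G] &&
     [forall i, forall j, tnth t i * tnth t j == tnth t j * tnth t i]].

Definition conj_orbit (G : {set gT}) n (t : n.-tuple gT) : {set n.-tuple gT} :=
  [set conj_tuple t g | g in G].

Definition beta (G : {set gT}) n : nat :=
  #|[set conj_orbit G t | t in comm_tuples G n]|.
End CommTuples.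

(* Formal power series with rational coefficients, as coefficient sequences *)
Definition fps := nat -> rat.
Local Open Scope ring_scope.
Definition Bseries (gT : finGroupType) (G : {set gT}) : fps :=
  fun n => (beta G n)%:R.
Definition mul_1mt (a : fps) : fps :=
  fun n => a n - (if n is k.+1 then a k else 0).
Definition fps_one : fps := fun n => if n is 0 then 1 else 0.
Definition fps_add (a b : fps) : fps := fun n => a n + b n.
Definition fps_sub (a b : fps) : fps := fun n => a n - b n.
Definition fps_scale (c : rat) (a : fps) : fps := fun n => c * a n.

From mathcomp Require Import all_boot all_algebra all_fingroup all_solvable frobenius.
From mathcomp Require Import ring.
From Stdlib Require Import FunctionalExtensionality.
(* By Burnside's lemma, beta_{X,n} |X| is the number of pairs (a, t) with a in X and
   t in X^(n) fixed by conjugation under a, i.e. the number |X^(n+1)| of commuting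
   (n+1)-tuples. In a Frobenius group G = N >< H the centraliser of a nontrivial
   element lies in N or in some H^y with y in N, and these conjugates of H are
   pairwise trivially intersecting, so a nontrivial commuting tuple of G lies either
   in N or in exactly one H^y: |G^(m)| = |N^(m)| + |N| (|H^(m)| - 1). With
   |G| = |N| |H| this gives beta_{G,n} |H| + 1 = beta_{N,n} + beta_{H,n} |H| for all n,
   which is the claimed identity once both sides are multiplied by (1 - t). *)

Set Implicit Arguments. Unset Strict Implicit. Unset Printing Implicit Defensive.

Section CommutingTuples.
Variable gT : finGroupType.
Local Open Scope group_scope.
Implicit Types (A B : {set gT}) (X : {group gT}).

Local Notation commb := (fun x y : gT => x * y == y * x).

Lemma comm_tuplesE A n (t : n.-tuple gT) :
  (t \in comm_tuples A n) = all [in A] t && all2rel commb t.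
Proof.
rewrite inE; congr andb.
  by apply/forallP/allP => [At x /tnthP[i ->] | At i]; [exact: At | exact/At/mem_tnth].
apply/forallP/allrelP => [ct x y /tnthP[i ->] /tnthP[j ->] | ct i].
  exact: forallP (ct i) j.
by apply/forallP => j; apply: ct; apply: mem_tnth.
Qed.

Lemma comm_tuplesP A n (t : n.-tuple gT) :
  reflect ({subset t <= A} /\ {in t &, forall x y, commute x y})
          (t \in comm_tuples A n).
Proof.
rewrite comm_tuplesE; apply: (iffP andP) => [[/allP At /allrelP ct] | [At ct]].
  by split=> // x y tx ty; apply/eqP/ct.
by split; [apply/allP | apply/allrelP => x y tx ty; apply/eqP/ct].
Qed.

Lemma comm_tuplesS A B n : A \subset B -> comm_tuples A n \subset comm_tuples B n.
Proof.
move=> sAB; apply/subsetP => t /comm_tuplesP[At ct].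
by apply/comm_tuplesP; split=> // x /At/(subsetP sAB).
Qed.

Lemma comm_tuples_cent1S A B n (t : n.-tuple gT) a :
  t \in comm_tuples A n -> a \in t -> 'C_A[a] \subset B -> t \in comm_tuples B n.
Proof.
case/comm_tuplesP=> At ct ta /subsetP sCB; apply/comm_tuplesP; split=> // x tx.
by apply: sCB; rewrite inE At //; apply/cent1P/ct.
Qed.

Definition ntcomm_tuples A n := comm_tuples A n :\ [tuple of nseq n 1].

Lemma nseq1_comm_tuples X n : [tuple of nseq n 1] \in comm_tuples X n.
Proof.
apply/comm_tuplesP; split=> [x | x y]; rewrite /= ?mem_nseq => /andP[_ /eqP->] //.
by case/andP=> _ /eqP->.
Qed.

Lemma card_ntcomm_tuples X n : #|comm_tuples X n| = #|ntcomm_tuples X n|.+1.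
Proof. by rewrite (cardsD1 [tuple of nseq n 1]) nseq1_comm_tuples. Qed.

Lemma nontrivial_tupleP n (t : n.-tuple gT) :
  reflect (exists2 a, a \in t & a != 1) (t != [tuple of nseq n 1]).
Proof.
have -> : (t == [tuple of nseq n 1]) = all (pred1 1) t.
  rewrite -(inj_eq val_inj); apply/eqP/all_pred1P => /= [-> | e]; first by rewrite size_nseq.
  by rewrite e size_tuple.
by rewrite -(has_predC (pred1 1)); apply: hasP.
Qed.

Lemma conj_tuple1 n (t : n.-tuple gT) : conj_tuple t 1 = t.
Proof. by apply: val_inj; rewrite /= -[RHS]map_id; apply: eq_map => x; rewrite conjg1. Qed.

Lemma conj_tupleM n (t : n.-tuple gT) x y :
  conj_tuple t (x * y) = conj_tuple (conj_tuple t x) y.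
Proof. by apply: val_inj; rewrite /= -map_comp; apply: eq_map => z; rewrite /= conjgM. Qed.

Canonical conj_tuple_action n := TotalAction (@conj_tuple1 n) (@conj_tupleM n).

Lemma comm_tuplesJ A n (t : n.-tuple gT) g :
  (conj_tuple t g \in comm_tuples (A :^ g) n) = (t \in comm_tuples A n).
Proof.
rewrite !comm_tuplesE /= all_map allrel_mapl allrel_mapr.
congr andb; first by apply: eq_all => x; rewrite /= memJ_conjg.
by apply: eq_allrel => x y; rewrite -!conjMg (inj_eq (@conjg_inj _ g)).
Qed.

Lemma acts_comm_tuples X n : [acts X, on comm_tuples X n | conj_tuple_action n].
Proof. by apply/actsP => g Xg t; rewrite /= -{1}(conjGid Xg) comm_tuplesJ. Qed.

Lemma conj_tuple_fixE n (S : {set n.-tuple gT}) (t : n.-tuple gT) a :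
  (t \in 'Fix_(S | conj_tuple_action n)[a]) = (t \in S) && all (commb a) t.
Proof.
rewrite in_setI; congr andb; apply/afix1P/allP => [/(congr1 val) /= | ca].
  rewrite -{2}[val t]map_id => /eq_in_map ta x /ta /conjg_fixP /commgP cxa.
  exact/eqP/esym.
apply: val_inj; rewrite /= -[RHS]map_id; apply/eq_in_map => x /ca /eqP cax.
exact/conjg_fixP/commgP/esym.
Qed.

Lemma comm_tuples_cons A n a (t : n.-tuple gT) :
  ([tuple of a :: t] \in comm_tuples A n.+1) =
  (a \in A) && (t \in 'Fix_(comm_tuples A n | conj_tuple_action n)[a]).
Proof.
rewrite conj_tuple_fixE !comm_tuplesE /= all2rel_cons; last first.
  by move=> x y; rewrite eq_sym.
by rewrite eqxx /= -!andbA (andbC (all2rel _ t)).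
Qed.

Lemma card_comm_tuplesS X n :
  #|comm_tuples X n.+1| =
  \sum_(a in X) #|'Fix_(comm_tuples X n | conj_tuple_action n)[a]|.
Proof.
rewrite -sum1_card (partition_big (@thead _ _) [in X]) /= => [|u]; last first.
  by case/tupleP: u => a t; rewrite theadE comm_tuples_cons => /andP[].
apply: eq_bigr => a Xa; rewrite sum1_card.
have cons_inj : injective (@cons_tuple n gT a) by move=> t1 t2 [] /val_inj.
rewrite -(card_imset _ cons_inj); apply: eq_card => u.
case/tupleP: u => b t; rewrite [LHS]unfold_in /= theadE comm_tuples_cons.
have [-> | nba] := eqVneq b a; first by rewrite (mem_imset _ _ cons_inj) Xa andbT.
rewrite andbF; apply/esym/imsetP => -[t' _ [eba _]].
by rewrite eba eqxx in nba.
Qed.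

Lemma beta_mul_card X n : (beta X n * #|X|)%N = #|comm_tuples X n.+1|.
Proof. by rewrite card_comm_tuplesS Frobenius_Cauchy ?acts_comm_tuples. Qed.

End CommutingTuples.

Section Frobenius.
Variables (gT : finGroupType) (G N H : {group gT}).
Local Open Scope group_scope.
Hypothesis frobG : [Frobenius G = N ><| H].

Let defG : N ><| H = G. Proof. by have [] := Frobenius_context frobG. Qed.
Let sNG : N \subset G. Proof. by have [/andP[]] := sdprod_context defG. Qed.
Let sHG : H \subset G. Proof. by have [] := sdprod_context defG. Qed.
Let tiNH : N :&: H = 1. Proof. by have [] := sdprod_context defG. Qed.
Let tiHG : normedTI H^# G H. Proof. by have /andP[] := FrobeniusWcompl frobG. Qed.

Lemma Frobenius_ker_or_conj_compl g :
  g \in G -> g \in N \/ exists2 y, y \in N & g ^ y^-1 \in H^#.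
Proof.
have [/eqP <- _ _] := and3P (Frobenius_partition frobG).
case/bigcupP=> _ /setU1P[-> | /imsetP[y Ny ->]]; first by left.
by right; exists y; rewrite // -mem_conjg.
Qed.

Definition conj_compl_tuples m :=
  [set conj_tuple p.2 p.1 | p in setX N (ntcomm_tuples H m)].

Lemma comm_tuples_Frobenius_sub m :
  comm_tuples G m \subset comm_tuples N m :|: conj_compl_tuples m.
Proof.
apply/subsetP => t Gt; rewrite in_setU.
have [-> | /nontrivial_tupleP[a ta nta]] := eqVneq t [tuple of nseq m 1].
  by rewrite nseq1_comm_tuples.
have Ga : a \in G by case/comm_tuplesP: Gt => /(_ a ta).
have [Na | [y Ny Hay]] := Frobenius_ker_or_conj_compl Ga.
  by rewrite (comm_tuples_cent1S Gt ta) // (Frobenius_cent1_ker frobG) // !inE nta.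
apply/orP; right; apply/imsetP; exists (y, conj_tuple t y^-1); last first.
  by rewrite /= -conj_tupleM mulVg conj_tuple1.
have Gty : conj_tuple t y^-1 \in comm_tuples G m.
  by rewrite -(conjGid (groupVr (subsetP sNG y Ny))) comm_tuplesJ.
have tay : a ^ y^-1 \in conj_tuple t y^-1 by apply: map_f.
rewrite in_setX Ny in_setD1 (comm_tuples_cent1S Gty tay) ?andbT.
  by apply/nontrivial_tupleP; exists (a ^ y^-1); rewrite ?conjg_eq1.
exact: cent1_normedTI tiHG _ Hay.
Qed.

Lemma conj_compl_tuples_sub m : conj_compl_tuples m \subset comm_tuples G m.
Proof.
apply/subsetP => _ /imsetP[[y s] /setXP[Ny /setD1P[_ Hs]] ->] /=.
rewrite -(conjGid (subsetP sNG y Ny)) comm_tuplesJ.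
exact: subsetP (comm_tuplesS m sHG) s Hs.
Qed.

Lemma comm_tuples_Frobenius m :
  comm_tuples G m = comm_tuples N m :|: conj_compl_tuples m.
Proof.
apply/eqP; rewrite eqEsubset comm_tuples_Frobenius_sub subUset.
by rewrite comm_tuplesS // conj_compl_tuples_sub.
Qed.

Lemma comm_tuples_ker_conj_compl_disjoint m :
  comm_tuples N m :&: conj_compl_tuples m = set0.
Proof.
apply/setP => t; rewrite inE in_set0; apply/andP => -[Nt].
case/imsetP=> -[y s] /setXP[Ny /setD1P[/nontrivial_tupleP[a sa nta] Hs]] def_t.
have Ha : a \in H by case/comm_tuplesP: Hs => /(_ a sa).
have Na : a \in N.
  rewrite -(groupJr _ Ny); case/comm_tuplesP: Nt => + _; apply.
  by rewrite def_t; apply: map_f.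
have /set1gP a1 : a \in [1] by rewrite -tiNH inE Na.
by rewrite a1 eqxx in nta.
Qed.

Lemma conj_compl_tuples_inj m :
  {in setX N (ntcomm_tuples H m) &, injective (fun p => conj_tuple p.2 p.1)}.
Proof.
move=> [y s] [y' s'] /setXP[Ny /setD1P[nts Hs]] /setXP[Ny' /setD1P[_ Hs']] /= e.
set z := y * y'^-1.
have e' : conj_tuple s z = s' by rewrite conj_tupleM e -conj_tupleM mulgV conj_tuple1.
have /nontrivial_tupleP[a sa nta] := nts.
have Nz : z \in N by rewrite groupM ?groupV.
have Ha : a \in H^# by rewrite !inE nta; case/comm_tuplesP: Hs => /(_ a sa).
have Hz : z \in H.
  have [_ _ tiHGJ] := normedTI_memJ_P tiHG.
  rewrite -(tiHGJ a) ?(subsetP sNG) // !inE conjg_eq1 nta.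
  by case/comm_tuplesP: Hs' => + _; apply; rewrite -e'; apply: map_f.
have /set1gP z1 : z \in [1] by rewrite -tiNH inE Nz.
rewrite -e' z1 conj_tuple1; congr pair; apply/eqP.
by rewrite eq_mulgV1 -/z z1.
Qed.

Lemma card_comm_tuples_Frobenius m :
  #|comm_tuples G m| = (#|comm_tuples N m| + #|N| * #|ntcomm_tuples H m|)%N.
Proof.
have := cardsUI (comm_tuples N m) (conj_compl_tuples m).
rewrite comm_tuples_ker_conj_compl_disjoint cards0 addn0 -comm_tuples_Frobenius => ->.
by rewrite card_in_imset ?cardsX //; apply: conj_compl_tuples_inj.
Qed.

Lemma beta_Frobenius n : (beta G n * #|H| + 1 = beta N n + beta H n * #|H|)%N.
Proof.
apply/eqP; rewrite -(eqn_pmul2l (cardG_gt0 N)); apply/eqP.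
have := beta_mul_card G n; have := beta_mul_card N n; have := beta_mul_card H n.
rewrite card_comm_tuples_Frobenius card_ntcomm_tuples -(sdprod_card defG).
move=> eH eN eG; rewrite !mulnDr mulnCA eG [(#|N| * beta N n)%N]mulnC eN eH.
by rewrite -addnA -mulnDr addn1.
Qed.

End Frobenius.

Import GRing.Theory Num.Theory.
Local Open Scope ring_scope.

Theorem theorem9p3 (gT : finGroupType) (G N H : {group gT}) :
  [Frobenius G = N ><| H]%g ->
  mul_1mt (Bseries G) =
  fps_add fps_one
    (fps_add
       (fps_scale (#|H|%:R)^-1%R (fps_sub (mul_1mt (Bseries N)) fps_one))
       (fps_sub (mul_1mt (Bseries H)) fps_one)).
Proof.
move=> frobG.
have H_neq0 : #|H|%:R != 0 :> rat by rewrite pnatr_eq0 -lt0n cardG_gt0.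
have betaE n : (beta G n)%:R = ((beta N n)%:R - 1) / #|H|%:R + (beta H n)%:R :> rat.
  have /(congr1 (GRing.natmul (1 : rat))) := beta_Frobenius frobG n.
  rewrite !natrD !natrM => eGNH; apply: (mulIf H_neq0).
  by rewrite mulrDl divfK // addrAC -eGNH addrK.
apply: functional_extensionality => -[|n];
  by rewrite /mul_1mt /fps_add /fps_one /fps_scale /fps_sub /Bseries !betaE; field.
Qed.
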